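(* Let $f(z)=\sum_{n=0}^{\infty}a_{n}z^{n}$ be an entire function with $a_{0}\cdot a_{n}>0$ for all $n\ge0$, of order $\rho(f)=\limsup_{n\to\infty}\frac{n\log n}{-\log|a_{n}|}<1$, having a nonzero root, and write $\frac{f(z)}{f(0)}=\prod_{n=1}^{\infty}\left(1+\frac{z}{\lambda_{n}}\right)$ with $\sum_{n}1/|\lambda_n|<\infty$, where $\{-\lambda_n\}$ are the zeros of $f$ with multiplicity. Assume there exists $\beta_{0}\in(0,1)$ with $\Re(\lambda_{n})\ge\beta_{0}|\lambda_{n}|>0$ for all $n\in\mathbb{N}$, and let $\Theta(t)=\sum_{n=1}^{\infty}e^{-\lambda_{n}t}$ for $t>0$. Then the sequence $\{\lambda_{n}\}_{n=1}^{\infty}$ is positive (all $\lambda_n>0$) if and only if $\Theta$ is completely monotonic on $(0,\infty)$.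
   Context: A function $g\in C^\infty(0,\infty)$ is completely monotonic on $(0,\infty)$ if $(-1)^{k}g^{(k)}(x)\ge 0$ for all $x>0$ and all $k\in\mathbb{N}_0$. *)

From Stdlib Require Import Reals.
From Coquelicot Require Import Coquelicot.
Open Scope R_scope.

Definition cexp (z : C) : C :=
  (exp (Re z) * cos (Im z), exp (Re z) * sin (Im z)).

Fixpoint part_prod (lam : nat -> C) (z : C) (N : nat) : C :=
  match N with
  | O => RtoC 1
  | S N' => Cmult (part_prod lam z N') (Cplus (RtoC 1) (Cdiv z (lam N')))
  end.

Definition Theta (lam : nat -> C) (t : R) : C :=
  (Series (fun n => Re (cexp (Copp (Cmult (lam n) (RtoC t))))),
   Series (fun n => Im (cexp (Copp (Cmult (lam n) (RtoC t)))))).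

Definition completely_monotonic (g : R -> R) : Prop :=
  (forall (k : nat) (x : R), 0 < x -> ex_derive_n g k x) /\
  (forall (k : nat) (x : R), 0 < x -> 0 <= (-1) ^ k * Derive_n g k x).

(* complete monotonicity of a complex-valued function of a real variable:
   (-1)^k g^(k)(x) >= 0 in C means it is real and nonnegative; since
   g^(k) = (Re g)^(k) + i (Im g)^(k), this unfolds to: Im g = 0 on (0,oo)
   and Re g completely monotonic. *)
Definition completely_monotonic_C (g : R -> C) : Prop :=
  (forall x : R, 0 < x -> Im (g x) = 0) /\
  completely_monotonic (fun x => Re (g x)).

From Stdlib Require Import Reals ZArith Lra Lia Classical FunctionalExtensionality.
From Coquelicot Require Import Coquelicot.
Open Scope R_scope.

(* If every [lam n] is real, every term [e^(-lam_n t)] of [Theta] is completely monotonic.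
   Conversely, [(-1)^k] times the k-th derivative of [Re Theta] is
   [sum_n Re (lam_n^k e^(-lam_n t))], and at [t = k tau] its n-th term is
   [|lam_n e^(-lam_n tau)|^k cos (k (arg lam_n - Im lam_n tau))].  The sector condition gives
   [|lam|^k e^(-Re lam t) <= C_k / |lam|] for [t >= c > 0], so all these series converge
   uniformly there.  If some [lam n] is not real, then at [tau0 = 1 / Re lam_n] the moduli
   [|lam_m e^(-lam_m tau0)|] are maximal only at non-real points (a real one gives at most
   [Re lam_n / e]); slightly to the right of [tau0] a single conjugate pair strictly dominates,
   and [tau] can be chosen there so that the phase of the pair is an odd multiple of [PI / D].
   For [k = D (2J + 1)] with [J] large the pair contributes [-|lam e^(-lam tau)|^k], which
   outweighs all other terms, so the k-th signed derivative is negative at [k tau]. *)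

Lemma exp_le_compat (x y : R) : x <= y -> exp x <= exp y.
Proof.
  intros H. destruct (Rle_lt_or_eq_dec _ _ H) as [Hlt| ->]; [|lra].
  now apply Rlt_le, exp_increasing.
Qed.

Lemma exp_INR_mul (k : nat) (x : R) : exp (INR k * x) = exp x ^ k.
Proof. rewrite <- Rpower_pow by apply exp_pos. unfold Rpower. now rewrite ln_exp. Qed.

Lemma pow_le_fact_mul_exp (n : nat) (x : R) :
  0 <= x -> x ^ n <= INR (Factorial.fact n) * exp x.
Proof.
  intros Hx.
  assert (Hterm : x ^ n / INR (Factorial.fact n)
                  <= sum_f_R0 (fun k => x ^ k / INR (Factorial.fact k)) n).
  { destruct n as [|n]; [simpl; lra|]. rewrite tech5.
    enough (0 <= sum_f_R0 (fun k => x ^ k / INR (Factorial.fact k)) n) by lra.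
    apply cond_pos_sum; intros k.
    apply Rdiv_le_0_compat; [apply pow_le, Hx | apply INR_fact_lt_0]. }
  pose proof (exp_ge_taylor x n Hx). pose proof (INR_fact_lt_0 n).
  apply Rle_div_l in Hterm; [|lra]. nra.
Qed.

Lemma pow_mul_exp_opp_le (k : nat) (r c : R) : 0 < r -> 0 < c ->
  r ^ k * exp (- (c * r)) <= INR (Factorial.fact (S k)) / c ^ S k / r.
Proof.
  intros Hr Hc.
  pose proof (pow_le_fact_mul_exp (S k) (c * r) ltac:(nra)) as H.
  rewrite Rpow_mult_distr in H.
  pose proof (exp_pos (c * r)). pose proof (pow_lt c (S k) Hc).
  rewrite exp_Ropp.
  apply (Rmult_le_reg_r (exp (c * r) * c ^ S k * r)); [apply Rmult_lt_0_compat; nra|].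
  replace (r ^ k * / exp (c * r) * (exp (c * r) * c ^ S k * r))
    with (c ^ S k * r ^ S k) by (simpl; field; lra).
  replace (INR (Factorial.fact (S k)) / c ^ S k / r * (exp (c * r) * c ^ S k * r))
    with (INR (Factorial.fact (S k)) * exp (c * r)) by (field; lra).
  exact H.
Qed.

Lemma pow_mul_lt_pow_eventually (r M Phi : R) : 0 <= r < M -> 0 <= Phi ->
  exists J, forall j, (J <= j)%nat -> r ^ j * Phi < M ^ S j.
Proof.
  intros [Hr HrM] HPhi.
  assert (HrM1 : Rabs (r / M) < 1).
  { rewrite Rabs_pos_eq by (apply Rdiv_le_0_compat; lra).
    apply Rmult_lt_reg_r with M; [lra|]. field_simplify; lra. }
  destruct (pow_lt_1_zero (r / M) HrM1 (M / (Phi + 1)) ltac:(apply Rdiv_lt_0_compat; lra))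
    as [J HJ].
  exists J. intros j Hj. specialize (HJ j Hj).
  rewrite Rabs_pos_eq in HJ by (apply pow_le, Rdiv_le_0_compat; lra).
  replace (r ^ j) with ((r / M) ^ j * M ^ j) by (rewrite <- Rpow_mult_distr; f_equal; field; lra).
  assert (HMj : 0 < M ^ j) by (apply pow_lt; lra).
  assert (Hfrac : M / (Phi + 1) * Phi < M).
  { apply Rmult_lt_reg_r with (Phi + 1); [lra|].
    replace (M / (Phi + 1) * Phi * (Phi + 1)) with (M * Phi) by (field; lra). nra. }
  assert ((r / M) ^ j * Phi < M).
  { eapply Rle_lt_trans; [|exact Hfrac]. apply Rmult_le_compat_r; lra. }
  rewrite <- tech_pow_Rmult. nra.
Qed.

Lemma cos_odd_mul_PI (z : Z) : cos (IZR (2 * z + 1) * PI) = -1.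
Proof.
  destruct (Z_le_gt_dec 0 z) as [Hz|Hz].
  - rewrite <- (Z2Nat.id z Hz), plus_IZR, mult_IZR, <- INR_IZR_INZ.
    replace ((2 * INR (Z.to_nat z) + 1) * PI) with (PI + 2 * INR (Z.to_nat z) * PI) by ring.
    now rewrite cos_period, cos_PI.
  - rewrite <- cos_neg.
    replace (- (IZR (2 * z + 1) * PI)) with (PI + 2 * IZR (- z - 1) * PI)
      by (rewrite !minus_IZR, plus_IZR, mult_IZR, opp_IZR; ring).
    rewrite <- (Z2Nat.id (- z - 1)) by lia. rewrite <- INR_IZR_INZ.
    now rewrite cos_period, cos_PI.
Qed.

Lemma odd_mul_PI_div_dense (A B : R) : A < B ->
  exists (D : nat) (z : Z), (0 < D)%nat /\ A < IZR (2 * z + 1) * (PI / INR D) < B.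
Proof.
  intros HAB. pose proof PI_RGT_0 as Hpi.
  destruct (INR_unbounded (2 * PI / (B - A))) as [D HD].
  assert (HD0 : 0 < INR D).
  { enough (0 < 2 * PI / (B - A)) by lra. apply Rdiv_lt_0_compat; lra. }
  set (w := PI / INR D).
  assert (Hw : 0 < w) by (apply Rdiv_lt_0_compat; lra).
  (* consecutive odd multiples of [w] are [2 w < B - A] apart *)
  assert (Hgap : 2 * w < B - A).
  { unfold w. apply (Rmult_lt_reg_r (INR D)); [lra|].
    apply (Rmult_lt_compat_r (B - A)) in HD; [|lra].
    replace (2 * PI / (B - A) * (B - A)) with (2 * PI) in HD by (field; lra).
    replace (2 * (PI / INR D) * INR D) with (2 * PI) by (field; lra). lra. }
  destruct (archimed (A / w)) as [Hx1 Hx2].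
  assert (Hodd : exists z : Z, A / w < IZR (2 * z + 1) <= A / w + 2).
  { destruct (Z.Even_or_Odd (up (A / w))) as [[m Hm]|[m Hm]]; exists m; rewrite Hm in Hx1, Hx2.
    - rewrite plus_IZR, mult_IZR in *. lra.
    - lra. }
  destruct Hodd as [z [Hz1 Hz2]].
  exists D, z. split; [apply INR_lt; simpl; lra|].
  apply (Rmult_lt_compat_r w) in Hz1; [|exact Hw].
  apply (Rmult_le_compat_r w) in Hz2; [|lra].
  replace (A / w * w) with A in Hz1 by (field; lra).
  replace ((A / w + 2) * w) with (A + 2 * w) in Hz2 by (field; lra).
  fold w. lra.
Qed.

Lemma argmax_bounded (Q : nat -> Prop) (h : nat -> R) (N : nat) :
  (forall n, Q n -> (n < N)%nat) -> (exists n, Q n) ->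
  exists m, Q m /\ forall n, Q n -> h n <= h m.
Proof.
  revert Q. induction N as [|N IH]; intros Q HQN [n0 Hn0].
  - specialize (HQN n0 Hn0). lia.
  - destruct (classic (exists n, Q n /\ (n < N)%nat)) as [Hlow|Hlow].
    + destruct (IH (fun n => Q n /\ (n < N)%nat)) as [m [[HQm _] Hm]]; [tauto|exact Hlow|].
      destruct (classic (Q N /\ h m < h N)) as [[HQN' Hlt]|Hnot].
      * exists N. split; [exact HQN'|]. intros n HQn.
        destruct (Nat.eq_dec n N) as [->|Hne]; [lra|].
        assert (n < N)%nat by (specialize (HQN n HQn); lia).
        specialize (Hm n (conj HQn H)). lra.
      * exists m. split; [exact HQm|]. intros n HQn.
        destruct (Nat.eq_dec n N) as [->|Hne].
        -- apply Rnot_lt_le. intros Hlt. apply Hnot. split; assumption.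
        -- apply Hm. split; [exact HQn|]. specialize (HQN n HQn). lia.
    + assert (Honly : forall n, Q n -> n = N).
      { intros n HQn. specialize (HQN n HQn).
        destruct (Nat.eq_dec n N) as [|Hne]; [assumption|].
        exfalso. apply Hlow. exists n. split; [exact HQn | lia]. }
      exists n0. split; [exact Hn0|]. intros n HQn.
      rewrite (Honly n HQn), (Honly n0 Hn0). lra.
Qed.

Lemma exists_max_of_eventually_le (h : nat -> R) (n0 N : nat) (c : R) :
  c < h n0 -> (forall n, (N <= n)%nat -> h n <= c) -> exists m, forall n, h n <= h m.
Proof.
  intros Hn0 Htail.
  destruct (argmax_bounded (fun n => (n < N)%nat) h N) as [m [_ Hm]]; auto.
  { exists n0. destruct (le_lt_dec N n0) as [H|H]; [specialize (Htail n0 H); lra | exact H]. }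
  exists m. intros n. destruct (le_lt_dec N n) as [H|H]; [|auto].
  pose proof (Htail n H) as Hn. destruct (le_lt_dec N n0) as [H0|H0].
  - specialize (Htail n0 H0). lra.
  - specialize (Hm n0 H0). lra.
Qed.

Lemma uniform_gap (Q : nat -> Prop) (h : nat -> R) (B : R) (N : nat) (c : R) :
  (forall n, Q n -> h n < B) -> c < B -> (forall n, (N <= n)%nat -> Q n -> h n <= c) ->
  exists r, r < B /\ forall n, Q n -> h n <= r.
Proof.
  intros HB Hc Htail.
  destruct (classic (exists n, Q n /\ (n < N)%nat)) as [Hlow|Hlow].
  - destruct (argmax_bounded (fun n => Q n /\ (n < N)%nat) h N) as [m [[HQm _] Hm]];
      [tauto | exact Hlow |].
    exists (Rmax (h m) c). split; [apply Rmax_lub_lt; auto|].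
    intros n HQn. destruct (le_lt_dec N n) as [H|H].
    + eapply Rle_trans; [apply Htail; auto | apply Rmax_r].
    + eapply Rle_trans; [apply Hm; auto | apply Rmax_l].
  - exists c. split; [exact Hc|]. intros n HQn. apply Htail; [|exact HQn].
    destruct (le_lt_dec N n) as [H|H]; [exact H|]. exfalso. eauto.
Qed.

Lemma Series_nonneg (a : nat -> R) :
  (forall n, 0 <= a n) -> ex_series a -> 0 <= Series a.
Proof.
  intros Ha Hex.
  assert (H : Series (fun n => 0 * a n) <= Series a)
    by (apply Series_le; [intros n; specialize (Ha n); lra | exact Hex]).
  rewrite Series_scal_l in H. lra.
Qed.

Lemma Series_ge_term (a : nat -> R) (n1 : nat) :
  (forall n, 0 <= a n) -> ex_series a -> a n1 <= Series a.
Proof.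
  intros Ha Hex.
  rewrite (Series_incr_n a (S n1)) by (lia || exact Hex). simpl pred.
  assert (Htail : 0 <= Series (fun k => a (S n1 + k)%nat))
    by (apply Series_nonneg; [auto | now apply (ex_series_incr_n a (S n1))]).
  enough (a n1 <= sum_f_R0 a n1) by lra.
  destruct n1 as [|n1]; [simpl; lra|]. rewrite tech5.
  enough (0 <= sum_f_R0 a n1) by lra. now apply cond_pos_sum.
Qed.

Lemma Series_le_sub_term (u p : nat -> R) (n1 : nat) (m : R) :
  ex_series u -> ex_series p -> (forall n, u n <= p n) -> u n1 <= p n1 - m ->
  Series u <= Series p - m.
Proof.
  intros Hu Hp Hle Hn1.
  assert (Hex : ex_series (fun n => p n - u n)) by exact (ex_series_minus p u Hp Hu).
  pose proof (Series_ge_term (fun n => p n - u n) n1) as H.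
  rewrite Series_minus in H by assumption.
  enough (p n1 - u n1 <= Series p - Series u) by lra.
  apply H; [intros n; specialize (Hle n); lra | exact Hex].
Qed.

Lemma CVU_dom_series_Mtest (u : nat -> R -> R) (M : nat -> R) (D : R -> Prop) :
  (forall n x, D x -> Rabs (u n x) <= M n) -> ex_series M ->
  CVU_dom (fun N x => sum_n (fun n => u n x) N) D.
Proof.
  intros Hb HM eps.
  assert (HS : is_lim_seq (sum_n M) (Series M)) by exact (Series_correct _ HM).
  apply is_lim_seq_spec in HS. destruct (HS eps) as [N0 HN0].
  exists N0. intros N HN x Hx.
  assert (Hex : ex_series (fun n => Rabs (u n x))).
  { apply (@ex_series_le R_AbsRing R_CompleteNormedModule _ M); [|exact HM].
    intros n. change (Rabs (Rabs (u n x)) <= M n). rewrite Rabs_Rabsolu. auto. }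
  change (Rabs (sum_n (fun n => u n x) N - Series (fun n => u n x)) < eps).
  rewrite Rabs_minus_sym.
  specialize (HN0 N HN).
  rewrite (Series_incr_n _ (S N)) by (lia || now apply ex_series_Rabs).
  rewrite (Series_incr_n M (S N)) in HN0 by (lia || exact HM).
  simpl pred in *. rewrite sum_n_Reals in *.
  replace (sum_f_R0 M N - (sum_f_R0 M N + Series (fun k => M (S N + k)%nat)))
    with (- Series (fun k => M (S N + k)%nat)) in HN0 by ring.
  rewrite Rabs_Ropp in HN0.
  replace (sum_f_R0 (fun n => u n x) N + Series (fun k => u (S N + k)%nat x)
           - sum_f_R0 (fun n => u n x) N)
    with (Series (fun k => u (S N + k)%nat x)) by ring.
  eapply Rle_lt_trans; [| eapply Rle_lt_trans; [apply Rle_abs | exact HN0]].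
  eapply Rle_trans; [apply Series_Rabs; now apply (ex_series_incr_n _ (S N)) in Hex|].
  apply Series_le; [intros n; split; [apply Rabs_pos | apply Hb, Hx]|].
  now apply (ex_series_incr_n M (S N)) in HM.
Qed.

(** * Damped cosines *)

(* [damped_cos k l t = Re (l^k e^(-l t))]: for [Re l > 0], [atan (Im l / Re l)] is the
   argument of [l]. *)
Definition damped_cos (k : nat) (l : C) (t : R) : R :=
  Cmod l ^ k * exp (- (Re l * t)) * cos (INR k * atan (Im l / Re l) - Im l * t).

Definition amp (l : C) (tau : R) : R := Cmod l * exp (- (Re l * tau)).

Definition phase (l : C) (tau : R) : R := atan (Im l / Re l) - Im l * tau.

Lemma Cmod_cos_sin_atan (l : C) : 0 < Re l ->
  Cmod l * cos (atan (Im l / Re l)) = Re l /\ Cmod l * sin (atan (Im l / Re l)) = Im l.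
Proof.
  destruct l as [a b]. unfold Re, Im; simpl. intros Ha.
  assert (Hs : 0 < sqrt (1 + (b / a)²)).
  { apply sqrt_lt_R0. pose proof (Rle_0_sqr (b / a)). lra. }
  assert (Hc : Cmod (a, b) = a * sqrt (1 + (b / a)²)).
  { unfold Cmod; simpl.
    replace (a * (a * 1) + b * (b * 1)) with ((a * a) * (1 + (b / a)²))
      by (unfold Rsqr; field; lra).
    rewrite sqrt_mult_alt by nra. now rewrite sqrt_square by lra. }
  rewrite cos_atan, sin_atan, Hc. split; field; lra.
Qed.

Lemma is_derive_damped_cos (k : nat) (l : C) (t : R) : 0 < Re l ->
  is_derive (damped_cos k l) t (- damped_cos (S k) l t).
Proof.
  intros Hl. destruct (Cmod_cos_sin_atan l Hl) as [Hcos Hsin].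
  unfold damped_cos. set (A := atan (Im l / Re l)) in *.
  auto_derive; [exact I|].
  rewrite S_INR.
  set (x := INR k * A + - (Im l * t)).
  replace ((INR k + 1) * A - Im l * t) with (x + A) by (unfold x; ring).
  rewrite cos_plus.
  transitivity (- (Cmod l ^ k * exp (- (Re l * t))
                   * (cos x * (Cmod l * cos A) - sin x * (Cmod l * sin A)))).
  - rewrite Hcos, Hsin. ring.
  - simpl pow. ring.
Qed.

Lemma damped_cos_mul_INR (k : nat) (l : C) (tau : R) :
  damped_cos k l (INR k * tau) = amp l tau ^ k * cos (INR k * phase l tau).
Proof.
  unfold damped_cos, amp, phase. rewrite Rpow_mult_distr, <- exp_INR_mul.
  replace (INR k * (- (Re l * tau))) with (- (Re l * (INR k * tau))) by ring.
  replace (INR k * (atan (Im l / Re l) - Im l * tau))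
    with (INR k * atan (Im l / Re l) - Im l * (INR k * tau)) by ring.
  reflexivity.
Qed.

Lemma Rabs_damped_cos_le (k : nat) (l : C) (t : R) :
  Rabs (damped_cos k l t) <= Cmod l ^ k * exp (- (Re l * t)).
Proof.
  unfold damped_cos.
  assert (Hpos : 0 <= Cmod l ^ k * exp (- (Re l * t)))
    by (apply Rmult_le_pos; [apply pow_le, Cmod_ge_0 | apply Rlt_le, exp_pos]).
  rewrite Rabs_mult, (Rabs_pos_eq _ Hpos).
  rewrite <- (Rmult_1_r (Cmod l ^ k * exp (- (Re l * t)))) at 2.
  apply Rmult_le_compat_l; [exact Hpos | apply Rabs_le, COS_bound].
Qed.

Lemma damped_cos_conj (k : nat) (l : C) (t : R) :
  damped_cos k (Cconj l) t = damped_cos k l t.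
Proof.
  unfold damped_cos. rewrite Cmod_conj, re_conj, im_conj.
  replace (- Im l / Re l) with (- (Im l / Re l)) by (unfold Rdiv; ring).
  rewrite atan_opp, <- cos_neg. f_equal. f_equal. ring.
Qed.

Lemma damped_cos_real_nonneg (k : nat) (l : C) (t : R) :
  Im l = 0 -> 0 <= damped_cos k l t.
Proof.
  intros Him. unfold damped_cos. rewrite Him.
  replace (0 / Re l) with 0 by (unfold Rdiv; ring).
  rewrite atan_0. replace (INR k * 0 - 0 * t) with 0 by ring. rewrite cos_0, Rmult_1_r.
  apply Rmult_le_pos; [apply pow_le, Cmod_ge_0 | apply Rlt_le, exp_pos].
Qed.

Lemma Rabs_damped_cos_mul_INR_le (k : nat) (l : C) (tau : R) :
  Rabs (damped_cos k l (INR k * tau)) <= amp l tau ^ k.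
Proof.
  eapply Rle_trans; [apply Rabs_damped_cos_le|]. unfold amp.
  rewrite Rpow_mult_distr, <- exp_INR_mul.
  replace (INR k * (- (Re l * tau))) with (- (Re l * (INR k * tau))) by ring. lra.
Qed.

Lemma amp_pos (l : C) (tau : R) : 0 < Cmod l -> 0 < amp l tau.
Proof. intros Hl. apply Rmult_lt_0_compat; [exact Hl | apply exp_pos]. Qed.

Lemma amp_shift (l : C) (tau0 tau : R) :
  amp l tau = amp l tau0 * exp (- (Re l * (tau - tau0))).
Proof. unfold amp. rewrite Rmult_assoc, <- exp_plus. do 3 f_equal. ring. Qed.

Lemma amp_antitone (l : C) (tau0 tau : R) : 0 <= Re l -> tau0 <= tau ->
  amp l tau <= amp l tau0.
Proof.
  intros Hl Htau. unfold amp. apply Rmult_le_compat_l; [apply Cmod_ge_0|].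
  apply exp_le_compat. nra.
Qed.

(* [x e^(-x/a)] is maximal at [x = a]. *)
Lemma amp_real_le (l : C) (a : R) : Im l = 0 -> 0 < Re l -> 0 < a ->
  amp l (/ a) <= a * exp (-1).
Proof.
  intros Him Hl Ha.
  assert (HCmod : Cmod l = Re l).
  { destruct l as [x y]. unfold Cmod, Re, Im in *; simpl in *. subst y.
    replace (x * (x * 1) + 0 * (0 * 1)) with (x * x) by ring. now apply sqrt_square, Rlt_le. }
  unfold amp. rewrite HCmod.
  set (x := Re l / a).
  pose proof (exp_ineq1_le (x - 1)).
  assert (Hx : 0 < x) by (apply Rdiv_lt_0_compat; assumption).
  replace (Re l * / a) with x by reflexivity.
  replace (Re l) with (a * x) at 1 by (unfold x; field; lra).
  replace (exp (-1)) with (exp (x - 1) * exp (- x)) by (rewrite <- exp_plus; f_equal; ring).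
  pose proof (exp_pos (- x)).
  rewrite Rmult_assoc. apply Rmult_le_compat_l; [lra|]. apply Rmult_le_compat_r; lra.
Qed.

Lemma amp_nonreal_gt (l : C) : Im l <> 0 -> 0 < Re l ->
  Re l * exp (-1) < amp l (/ Re l).
Proof.
  intros Him Hl. unfold amp.
  replace (Re l * / Re l) with 1 by (field; lra).
  apply Rmult_lt_compat_r; [apply exp_pos|].
  destruct l as [x y]. unfold Cmod, Re, Im in *; simpl in *.
  rewrite <- (sqrt_square x) at 1 by lra.
  apply sqrt_lt_1; [nra | nra |].
  assert (0 < y * y) by (apply Rsqr_pos_lt; exact Him). nra.
Qed.

Lemma amp_Re_eq_conj (l l' : C) (tau : R) :
  amp l tau = amp l' tau -> Re l = Re l' -> l = l' \/ l = Cconj l'.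
Proof.
  intros Hamp HRe. unfold amp in Hamp. rewrite HRe in Hamp.
  apply Rmult_eq_reg_r in Hamp; [|apply Rgt_not_eq, exp_pos].
  destruct l as [x y], l' as [x' y']. unfold Cmod, Re, Im, Cconj in *; simpl in *. subst x'.
  apply sqrt_inj in Hamp; [|nra|nra].
  assert (Hy : (y - y') * (y + y') = 0) by nra.
  destruct (Rmult_integral _ _ Hy) as [E|E]; [left | right]; f_equal; lra.
Qed.

Lemma exists_phase_odd_mul_PI (l : C) (tau0 tau1 : R) : Im l <> 0 -> tau0 < tau1 ->
  exists (tau : R) (D : nat), tau0 < tau < tau1 /\ (0 < D)%nat /\
    forall J : nat, cos (INR (D * (2 * J + 1)) * phase l tau) = -1.
Proof.
  intros Hb H01.
  set (p0 := phase l tau0). set (p1 := phase l tau1).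
  assert (Hp : Rmin p0 p1 < Rmax p0 p1).
  { assert (p0 <> p1).
    { unfold p0, p1, phase. intros E. apply Hb.
      apply (Rmult_eq_reg_r (tau1 - tau0)); [|lra]. lra. }
    unfold Rmin, Rmax. destruct (Rle_dec p0 p1); lra. }
  destruct (odd_mul_PI_div_dense _ _ Hp) as [D [z [HD Hq]]].
  set (q := IZR (2 * z + 1) * (PI / INR D)) in *.
  assert (Hbetween : (q - p0) * (q - p1) < 0)
    by (unfold Rmin, Rmax in Hq; destruct (Rle_dec p0 p1); nra).
  exists ((atan (Im l / Re l) - q) / Im l), D.
  assert (Hphase : phase l ((atan (Im l / Re l) - q) / Im l) = q)
    by (unfold phase; field; exact Hb).
  split.
  - set (tau := (atan (Im l / Re l) - q) / Im l) in *.
    assert (Hq0 : q - p0 = - Im l * (tau - tau0)) by (rewrite <- Hphase; unfold p0, phase; ring).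
    assert (Hq1 : q - p1 = - Im l * (tau - tau1)) by (rewrite <- Hphase; unfold p1, phase; ring).
    rewrite Hq0, Hq1 in Hbetween.
    assert (0 < Im l * Im l) by (apply Rsqr_pos_lt; exact Hb).
    assert ((tau - tau0) * (tau - tau1) < 0) by nra.
    split; nra.
  - split; [exact HD|]. intros J. rewrite Hphase.
    replace (INR (D * (2 * J + 1)) * q)
      with (IZR (2 * (2 * z * Z.of_nat J + z + Z.of_nat J) + 1) * PI).
    + apply cos_odd_mul_PI.
    + assert (H : INR D <> 0) by (apply not_0_INR; lia).
      unfold q. rewrite mult_INR, plus_INR, mult_INR, (INR_IZR_INZ J).
      repeat rewrite ?plus_IZR, ?mult_IZR. simpl. field. exact H.
Qed.

(** * Exponents in a sector *)

Section Sector.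

Variable lam : nat -> C.
Variable beta : R.
Hypothesis Hbeta : 0 < beta.
Hypothesis Hsector : forall n, beta * Cmod (lam n) <= Re (lam n) /\ 0 < beta * Cmod (lam n).
Hypothesis Hsum : ex_series (fun n => / Cmod (lam n)).

Lemma Cmod_lam_pos (n : nat) : 0 < Cmod (lam n).
Proof. destruct (Hsector n). nra. Qed.

Lemma Re_lam_pos (n : nat) : 0 < Re (lam n).
Proof. destruct (Hsector n). lra. Qed.

Lemma ex_series_div_Cmod (K : R) : ex_series (fun n => K / Cmod (lam n)).
Proof. exact (ex_series_scal_l K _ Hsum). Qed.

Lemma Cmod_pow_mul_exp_le (k : nat) (c t : R) (n : nat) : 0 < c -> c <= t ->
  Cmod (lam n) ^ k * exp (- (Re (lam n) * t))
  <= INR (Factorial.fact (S k)) / (beta * c) ^ S k / Cmod (lam n).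
Proof.
  intros Hc Hct. pose proof (Cmod_lam_pos n). destruct (Hsector n) as [Hre _].
  eapply Rle_trans; [| apply pow_mul_exp_opp_le; nra].
  apply Rmult_le_compat_l; [apply pow_le; lra|].
  apply exp_le_compat, Ropp_le_contravar.
  pose proof (proj2 (Hsector n)) as Hbc.
  apply Rle_trans with (beta * Cmod (lam n) * t); [nra | apply Rmult_le_compat_r; lra].
Qed.

Lemma ex_series_Cmod_pow_mul_exp (k : nat) (t : R) : 0 < t ->
  ex_series (fun n => Cmod (lam n) ^ k * exp (- (Re (lam n) * t))).
Proof.
  intros Ht.
  apply (@ex_series_le R_AbsRing R_CompleteNormedModule _
           (fun n => INR (Factorial.fact (S k)) / (beta * t) ^ S k / Cmod (lam n)));
    [|apply ex_series_div_Cmod].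
  intros n. change (Rabs (Cmod (lam n) ^ k * exp (- (Re (lam n) * t)))
                    <= INR (Factorial.fact (S k)) / (beta * t) ^ S k / Cmod (lam n)).
  rewrite Rabs_pos_eq by (apply Rmult_le_pos; [apply pow_le, Cmod_ge_0 | apply Rlt_le, exp_pos]).
  apply Cmod_pow_mul_exp_le; lra.
Qed.

Lemma ex_series_damped_cos (k : nat) (t : R) : 0 < t ->
  ex_series (fun n => damped_cos k (lam n) t).
Proof.
  intros Ht. apply ex_series_Rabs.
  apply (@ex_series_le R_AbsRing R_CompleteNormedModule _
           (fun n => Cmod (lam n) ^ k * exp (- (Re (lam n) * t))));
    [|exact (ex_series_Cmod_pow_mul_exp k t Ht)].
  intros n. change (Rabs (Rabs (damped_cos k (lam n) t))
                    <= Cmod (lam n) ^ k * exp (- (Re (lam n) * t))).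
  rewrite Rabs_Rabsolu. apply Rabs_damped_cos_le.
Qed.

Lemma ex_series_amp (tau : R) : 0 < tau -> ex_series (fun n => amp (lam n) tau).
Proof.
  intros Htau.
  apply (ex_series_ext (fun n => Cmod (lam n) ^ 1 * exp (- (Re (lam n) * tau)))).
  - intros n. unfold amp. now rewrite pow_1.
  - exact (ex_series_Cmod_pow_mul_exp 1 tau Htau).
Qed.

Lemma amp_eventually_le (tau e : R) : 0 < tau -> 0 < e ->
  exists N, forall n, (N <= n)%nat -> amp (lam n) tau <= e.
Proof.
  intros Htau He.
  pose proof (ex_series_lim_0 _ (ex_series_amp tau Htau)) as Hlim.
  apply is_lim_seq_spec in Hlim. destruct (Hlim (mkposreal e He)) as [N HN].
  exists N. intros n Hn. specialize (HN n Hn). simpl in HN.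
  apply Rabs_lt_between in HN. lra.
Qed.

Definition Theta_k (k : nat) (t : R) : R := Series (fun n => damped_cos k (lam n) t).

Lemma is_derive_partial_sum_damped_cos (k N : nat) (x : R) :
  is_derive (fun y => sum_n (fun n => damped_cos k (lam n) y) N) x
            (sum_n (fun n => - damped_cos (S k) (lam n) x) N).
Proof.
  apply (is_derive_sum_n (fun n y => damped_cos k (lam n) y)).
  intros n y. apply is_derive_damped_cos, Re_lam_pos.
Qed.

Lemma CVU_dom_partial_sum_damped_cos (k : nat) (c : R) : 0 < c ->
  CVU_dom (fun N x => sum_n (fun n => damped_cos k (lam n) x) N) (fun x => c < x).
Proof.
  intros Hc.
  apply (CVU_dom_series_Mtest _
           (fun n => INR (Factorial.fact (S k)) / (beta * c) ^ S k / Cmod (lam n)));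
    [|apply ex_series_div_Cmod].
  intros n x Hx. eapply Rle_trans; [apply Rabs_damped_cos_le|].
  apply Cmod_pow_mul_exp_le; lra.
Qed.

Lemma CVU_dom_partial_sum_opp_damped_cos (k : nat) (c : R) : 0 < c ->
  CVU_dom (fun N x => sum_n (fun n => - damped_cos k (lam n) x) N) (fun x => c < x).
Proof.
  intros Hc.
  apply (CVU_dom_series_Mtest _
           (fun n => INR (Factorial.fact (S k)) / (beta * c) ^ S k / Cmod (lam n)));
    [|apply ex_series_div_Cmod].
  intros n x Hx. rewrite Rabs_Ropp. eapply Rle_trans; [apply Rabs_damped_cos_le|].
  apply Cmod_pow_mul_exp_le; lra.
Qed.

(* Termwise differentiation, justified by uniform convergence on [(t/2, oo)]. *)
Lemma is_derive_Theta_k (k : nat) (t : R) : 0 < t ->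
  is_derive (Theta_k k) t (- Theta_k (S k) t).
Proof.
  intros Ht.
  set (S_N := fun N x => sum_n (fun n => damped_cos k (lam n) x) N).
  assert (HDerive : forall N x,
             Derive (S_N N) x = sum_n (fun n => - damped_cos (S k) (lam n) x) N)
    by (intros; apply is_derive_unique, is_derive_partial_sum_damped_cos).
  assert (HDerive_fun : (fun N x => Derive (S_N N) x)
                        = (fun N x => sum_n (fun n => - damped_cos (S k) (lam n) x) N))
    by (do 2 (apply functional_extensionality; intro); apply HDerive).
  assert (Hcont : forall N x, continuity_pt (Derive (S_N N)) x).
  { intros N x.
    apply (continuity_pt_ext (fun y => sum_n (fun n => - damped_cos (S k) (lam n) y) N));
      [intros y; symmetry; apply HDerive|].
    apply continuity_pt_filterlim.
    enough (Hd : ex_derive (fun y => sum_n (fun n => - damped_cos (S k) (lam n) y) N) x)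
      by exact (ex_derive_continuous _ _ Hd).
    exists (sum_n (fun n => - - damped_cos (S (S k)) (lam n) x) N).
    apply (is_derive_sum_n (fun n y => - damped_cos (S k) (lam n) y)). intros n y.
    apply (is_derive_opp (damped_cos (S k) (lam n))), is_derive_damped_cos, Re_lam_pos. }
  pose proof (CVU_Derive S_N (fun x => t / 2 < x) (open_gt (t / 2))
                ltac:(intros a b x Ha Hb Hx; lra)
                (CVU_dom_partial_sum_damped_cos k (t / 2) ltac:(lra))
                ltac:(intros N x _; eexists; apply is_derive_partial_sum_damped_cos)
                ltac:(intros N x _; apply Hcont)
                ltac:(rewrite HDerive_fun; apply CVU_dom_partial_sum_opp_damped_cos; lra)
                t ltac:(lra)) as H.
  rewrite (Lim_seq_ext _ _ (fun N => HDerive N t)) in H.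
  unfold Theta_k. rewrite <- Series_opp. exact H.
Qed.

Lemma Derive_n_Theta_k (k : nat) (t : R) : 0 < t ->
  ex_derive_n (Theta_k 0) k t /\ Derive_n (Theta_k 0) k t = (-1) ^ k * Theta_k k t.
Proof.
  revert t. induction k as [|k IH]; intros t Ht; [split; [exact I | simpl; ring]|].
  assert (Hloc : locally t (fun y => (-1) ^ k * Theta_k k y = Derive_n (Theta_k 0) k y)).
  { apply (filter_imp (fun y => 0 < y)); [intros y Hy; symmetry; apply IH, Hy|].
    exact (open_gt 0 t Ht). }
  assert (Hd : is_derive (fun y => (-1) ^ k * Theta_k k y) t ((-1) ^ k * - Theta_k (S k) t))
    by (apply is_derive_scal, is_derive_Theta_k, Ht).
  split.
  - apply (ex_derive_ext_loc _ _ _ Hloc). eexists; exact Hd.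
  - change (Derive (Derive_n (Theta_k 0) k) t = (-1) ^ S k * Theta_k (S k) t).
    rewrite (Derive_ext_loc _ _ t (filter_imp _ _ (fun y H => eq_sym H) Hloc)).
    transitivity ((-1) ^ k * - Theta_k (S k) t); [apply is_derive_unique, Hd | simpl; ring].
Qed.

Lemma amp_maximizers_bounded (tau M : R) : 0 < tau -> 0 < M ->
  exists N, forall n, M <= amp (lam n) tau -> (n < N)%nat.
Proof.
  intros Htau HM. destruct (amp_eventually_le tau (M / 2) Htau ltac:(lra)) as [N HN].
  exists N. intros n Hn. destruct (le_lt_dec N n) as [H|H]; [|exact H].
  specialize (HN n H). lra.
Qed.

Lemma amp_gap (tau M : R) : 0 < tau -> 0 < M -> (forall n, amp (lam n) tau <= M) ->
  exists r, r < M /\ forall n, amp (lam n) tau <> M -> amp (lam n) tau <= r.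
Proof.
  intros Htau HM Hmax. destruct (amp_eventually_le tau (M / 2) Htau ltac:(lra)) as [N HN].
  apply (uniform_gap _ _ M N (M / 2)); [|lra|intros n Hn _; exact (HN n Hn)].
  intros n Hn. destruct (Rle_lt_or_eq_dec _ _ (Hmax n)) as [H|H]; [exact H|contradiction].
Qed.

Lemma exists_nonreal_amp_argmax (n0 : nat) : Im (lam n0) <> 0 ->
  exists tau0 n1, 0 < tau0 /\ Im (lam n1) <> 0 /\
    (forall n, amp (lam n) tau0 <= amp (lam n1) tau0) /\
    (forall n, amp (lam n) tau0 = amp (lam n1) tau0 -> Re (lam n1) <= Re (lam n)).
Proof.
  intros Hn0.
  set (a0 := Re (lam n0)). assert (Ha0 : 0 < a0) by apply Re_lam_pos.
  assert (Hta0 : 0 < / a0) by (apply Rinv_0_lt_compat, Ha0).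
  assert (Hn0_gt : a0 * exp (-1) < amp (lam n0) (/ a0)) by exact (amp_nonreal_gt _ Hn0 Ha0).
  destruct (amp_eventually_le (/ a0) (a0 * exp (-1)) Hta0) as [N HN];
    [pose proof (exp_pos (-1)); nra|].
  destruct (exists_max_of_eventually_le (fun n => amp (lam n) (/ a0)) n0 N (a0 * exp (-1))
              Hn0_gt HN) as [m Hm].
  set (P := fun n => amp (lam n) (/ a0) = amp (lam m) (/ a0)).
  destruct (amp_maximizers_bounded (/ a0) (amp (lam m) (/ a0)) Hta0) as [N' HN'];
    [apply amp_pos, Cmod_lam_pos|].
  destruct (argmax_bounded P (fun n => - Re (lam n)) N') as (n1 & HPn1 & Hn1min);
    [intros n Hn; apply HN'; unfold P in Hn; lra | exists m; reflexivity |].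
  exists (/ a0), n1. split; [exact Hta0|]. split; [|split].
  - (* a real [lam n] has [amp (lam n) (/ a0) <= a0 / e < amp (lam n0) (/ a0)] *)
    intros Him. pose proof (amp_real_le (lam n1) a0 Him (Re_lam_pos n1) Ha0).
    specialize (Hm n0). unfold P in HPn1. lra.
  - intros n. rewrite HPn1. apply Hm.
  - intros n Hn. enough (- Re (lam n) <= - Re (lam n1)) by lra.
    apply Hn1min. unfold P in *. congruence.
Qed.

(* [ln (amp (lam n) tau)] is affine in [tau] with slope [- Re (lam n)]: just right of [tau0]
   only the maximisers of least real part, [lam n1] and its conjugate, stay on top. *)
Lemma amp_dominated_by_conj_pair (tau0 : R) (n1 : nat) : 0 < tau0 ->
  (forall n, amp (lam n) tau0 <= amp (lam n1) tau0) ->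
  (forall n, amp (lam n) tau0 = amp (lam n1) tau0 -> Re (lam n1) <= Re (lam n)) ->
  exists eps, 0 < eps /\ forall tau, tau0 < tau < tau0 + eps ->
    exists r, 0 <= r < amp (lam n1) tau /\
      forall n, lam n = lam n1 \/ lam n = Cconj (lam n1) \/ amp (lam n) tau <= r.
Proof.
  intros Htau0 Hmax Hmin.
  set (M0 := amp (lam n1) tau0) in *. set (a1 := Re (lam n1)) in *.
  set (P := fun n => amp (lam n) tau0 = M0).
  assert (HM0 : 0 < M0) by apply amp_pos, Cmod_lam_pos.
  assert (Ha1 : 0 < a1) by apply Re_lam_pos.
  destruct (amp_gap tau0 M0 Htau0 HM0 Hmax) as (r0 & Hr0 & Hr0b).
  destruct (amp_maximizers_bounded tau0 M0 Htau0 HM0) as [N HN].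
  exists ((M0 - r0) / (M0 * a1)). split; [apply Rdiv_lt_0_compat; nra|].
  intros tau [Htau1 Htau2].
  set (M := amp (lam n1) tau).
  assert (HMpos : 0 < M) by apply amp_pos, Cmod_lam_pos.
  assert (HM : M = M0 * exp (- (a1 * (tau - tau0)))) by apply amp_shift.
  assert (Hr0M : r0 < M).
  { pose proof (exp_ineq1_le (- (a1 * (tau - tau0)))).
    apply (Rmult_lt_compat_r (M0 * a1)) in Htau2; [|nra].
    replace ((tau0 + (M0 - r0) / (M0 * a1)) * (M0 * a1))
      with (tau0 * (M0 * a1) + (M0 - r0)) in Htau2 by (field; lra).
    nra. }
  destruct (uniform_gap (fun n => P n /\ Re (lam n) <> a1) (fun n => amp (lam n) tau) M N r0)
    as (r3 & Hr3 & Hr3b);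
    [| exact Hr0M | intros n Hn [HPn _]; specialize (HN n (Req_le_sym _ _ HPn)); lia |].
  { intros n [HPn Hne]. rewrite HM, (amp_shift _ tau0), HPn.
    apply Rmult_lt_compat_l; [lra|]. apply exp_increasing.
    assert (a1 < Re (lam n)) by (destruct (Rle_lt_or_eq_dec _ _ (Hmin n HPn)); lra).
    nra. }
  exists (Rmax (Rmax r0 r3) 0).
  split; [split; [apply Rmax_r | repeat apply Rmax_lub_lt; lra]|].
  intros n. destruct (classic (P n)) as [HPn|HPn].
  - destruct (Req_dec (Re (lam n)) a1) as [Hre|Hre].
    + destruct (amp_Re_eq_conj _ _ _ HPn Hre) as [E|E]; [left|right; left]; exact E.
    + right; right. eapply Rle_trans; [apply Hr3b; split; assumption|].
      eapply Rle_trans; [apply Rmax_r | apply Rmax_l].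
  - right; right. apply Rle_trans with (amp (lam n) tau0).
    + apply amp_antitone; [apply Rlt_le, Re_lam_pos | lra].
    + eapply Rle_trans; [apply Hr0b, HPn|]. eapply Rle_trans; [apply Rmax_l | apply Rmax_l].
Qed.

Lemma Theta_k_neg_of_amp_dominated (n1 : nat) (tau r : R) :
  0 < tau -> 0 <= r < amp (lam n1) tau ->
  (forall n, lam n = lam n1 \/ lam n = Cconj (lam n1) \/ amp (lam n) tau <= r) ->
  exists J : nat, forall k : nat, (J < k)%nat -> cos (INR k * phase (lam n1) tau) = -1 ->
    Theta_k k (INR k * tau) < 0.
Proof.
  intros Htau [Hr HrM] Hdom.
  set (M := amp (lam n1) tau) in *.
  set (Phi := Series (fun n => amp (lam n) tau)).
  assert (HPhi : 0 <= Phi).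
  { apply Series_nonneg; [|apply ex_series_amp, Htau].
    intros n. apply Rlt_le, amp_pos, Cmod_lam_pos. }
  destruct (pow_mul_lt_pow_eventually r M Phi (conj Hr HrM) HPhi) as [J HJ].
  exists J. intros k Hk Hcos. destruct k as [|j]; [lia|].
  assert (Hrj : 0 <= r ^ j) by (apply pow_le, Hr).
  assert (HMk : 0 < M ^ S j) by (apply pow_lt; lra).
  assert (Hn1 : damped_cos (S j) (lam n1) (INR (S j) * tau) = - M ^ S j)
    by (rewrite damped_cos_mul_INR, Hcos; fold M; ring).
  assert (Hle : forall n,
             damped_cos (S j) (lam n) (INR (S j) * tau) <= r ^ j * amp (lam n) tau).
  { intros n. pose proof (amp_pos (lam n) tau (Cmod_lam_pos n)).
    assert (Hnn : 0 <= r ^ j * amp (lam n) tau) by (apply Rmult_le_pos; lra).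
    destruct (Hdom n) as [E|[E|Hn]].
    - rewrite E at 1. rewrite Hn1. lra.
    - rewrite E at 1. rewrite damped_cos_conj, Hn1. lra.
    - eapply Rle_trans; [apply Rle_abs|].
      eapply Rle_trans; [apply Rabs_damped_cos_mul_INR_le|].
      change (amp (lam n) tau ^ S j) with (amp (lam n) tau * amp (lam n) tau ^ j).
      rewrite Rmult_comm. apply Rmult_le_compat_r; [lra | apply pow_incr; lra]. }
  assert (Hbound : Theta_k (S j) (INR (S j) * tau) <= r ^ j * Phi - M ^ S j).
  { unfold Phi. rewrite <- Series_scal_l.
    apply (Series_le_sub_term _ _ n1);
      [apply ex_series_damped_cos; apply Rmult_lt_0_compat; [apply lt_0_INR; lia | lra]
      | exact (ex_series_scal_l (r ^ j) _ (ex_series_amp tau Htau)) | exact Hle |].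
    rewrite Hn1. fold M. assert (0 <= r ^ j * M) by (apply Rmult_le_pos; lra). lra. }
  specialize (HJ j ltac:(lia)). lra.
Qed.

Lemma Im_lam_eq_0_of_Theta_k_nonneg :
  (forall k t, 0 < t -> 0 <= Theta_k k t) -> forall n, Im (lam n) = 0.
Proof.
  intros Hnonneg n. apply NNPP. intros Hn.
  destruct (exists_nonreal_amp_argmax n Hn) as (tau0 & n1 & Htau0 & Hn1 & Hmax & Hmin).
  destruct (amp_dominated_by_conj_pair tau0 n1 Htau0 Hmax Hmin) as (eps & Heps & Henv).
  destruct (exists_phase_odd_mul_PI (lam n1) tau0 (tau0 + eps) Hn1 ltac:(lra))
    as (tau & D & Htau & HD & Hcos).
  destruct (Henv tau Htau) as (r & Hr & Hdom).
  destruct (Theta_k_neg_of_amp_dominated n1 tau r ltac:(lra) Hr Hdom) as [J HJ].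
  set (k := (D * (2 * J + 1))%nat).
  assert (Hk : (J < k)%nat) by (unfold k; nia).
  assert (Ht : 0 < INR k * tau) by (apply Rmult_lt_0_compat; [apply lt_0_INR; lia | lra]).
  specialize (Hnonneg k _ Ht). specialize (HJ k Hk (Hcos J)). lra.
Qed.

End Sector.

(** * Complete monotonicity of Theta *)

Lemma Re_Theta (lam : nat -> C) (t : R) : Re (Theta lam t) = Theta_k lam 0 t.
Proof.
  unfold Theta, Theta_k. simpl. apply Series_ext. intros n.
  unfold cexp, damped_cos. destruct (lam n) as [a b]. unfold Re, Im; simpl.
  replace (- (a * t - b * 0)) with (- (a * t)) by ring.
  replace (- (a * 0 + b * t)) with (0 * atan (b / a) - b * t) by ring. ring.
Qed.

Lemma Im_Theta_real (lam : nat -> C) (t : R) :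
  (forall n, Im (lam n) = 0) -> Im (Theta lam t) = 0.
Proof.
  intros Hreal. unfold Theta. simpl.
  rewrite (Series_ext _ (fun _ => 0 * 0)), Series_scal_l; [ring|].
  intros n. unfold cexp. simpl. specialize (Hreal n). unfold Im in Hreal. rewrite Hreal.
  replace (- (fst (lam n) * 0 + 0 * t)) with 0 by ring. rewrite sin_0. ring.
Qed.

Lemma completely_monotonic_Re_Theta_iff (lam : nat -> C) (beta : R) :
  0 < beta ->
  (forall n, beta * Cmod (lam n) <= Re (lam n) /\ 0 < beta * Cmod (lam n)) ->
  ex_series (fun n => / Cmod (lam n)) ->
  completely_monotonic (fun t => Re (Theta lam t))
  <-> forall k t, 0 < t -> 0 <= Theta_k lam k t.
Proof.
  intros Hbeta Hsector Hsum.
  pose proof (Derive_n_Theta_k lam beta Hbeta Hsector Hsum) as HD.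
  replace (fun t => Re (Theta lam t)) with (Theta_k lam 0)
    by (apply functional_extensionality; intros t; symmetry; apply Re_Theta).
  assert (Hsign : forall k t, 0 < t -> (-1) ^ k * Derive_n (Theta_k lam 0) k t = Theta_k lam k t).
  { intros k t Ht. rewrite (proj2 (HD k t Ht)), <- Rmult_assoc, <- Rpow_mult_distr.
    replace (-1 * -1) with 1 by ring. now rewrite pow1, Rmult_1_l. }
  split.
  - intros [_ Hcm] k t Ht. rewrite <- Hsign by exact Ht. apply Hcm, Ht.
  - intros Hnonneg. split; [intros k t Ht; apply HD, Ht|].
    intros k t Ht. rewrite Hsign by exact Ht. apply Hnonneg, Ht.
Qed.

Theorem lemma3 (a : nat -> C) (f : C -> C) (lam : nat -> C) :
  (* f is entire, given by its everywhere convergent Taylor series *)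
  (forall z : C, is_series (fun n => Cmult (a n) (pow_n z n)) (f z)) ->
  (* a_0 * a_n > 0 for all n >= 0 *)
  (forall n : nat, Im (Cmult (a 0%nat) (a n)) = 0 /\ 0 < Re (Cmult (a 0%nat) (a n))) ->
  (* order rho(f) = limsup n log n / (- log |a_n|) < 1 *)
  Rbar_lt (LimSup_seq (fun n => INR n * ln (INR n) / (- ln (Cmod (a n))))) 1 ->
  (* f has a nonzero root *)
  (exists z : C, z <> RtoC 0 /\ f z = RtoC 0) ->
  (* Hadamard product: f(z)/f(0) = prod_n (1 + z / lam_n), sum 1/|lam_n| < oo *)
  (forall z : C,
     filterlim (part_prod lam z) eventually (locally (Cdiv (f z) (f (RtoC 0))))) ->
  ex_series (fun n => / Cmod (lam n)) ->
  (* Re lam_n >= beta0 |lam_n| > 0 for some beta0 in (0,1) *)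
  (exists beta0 : R, 0 < beta0 < 1 /\
     forall n : nat, beta0 * Cmod (lam n) <= Re (lam n) /\ 0 < beta0 * Cmod (lam n)) ->
  ((forall n : nat, Im (lam n) = 0 /\ 0 < Re (lam n)) <->
   completely_monotonic_C (Theta lam)).
Proof.
  intros _ _ _ _ _ Hsum [beta [[Hbeta _] Hsector]].
  unfold completely_monotonic_C.
  rewrite (completely_monotonic_Re_Theta_iff lam beta Hbeta Hsector Hsum).
  split.
  - intros Hreal. split.
    + intros t _. apply Im_Theta_real. intros n. apply Hreal.
    + intros k t Ht. apply Series_nonneg; [|apply (ex_series_damped_cos lam beta Hbeta Hsector Hsum), Ht].
      intros n. apply damped_cos_real_nonneg, Hreal.
  - intros [_ Hnonneg] n. split.
    + exact (Im_lam_eq_0_of_Theta_k_nonneg lam beta Hbeta Hsector Hsum Hnonneg n).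
    + exact (Re_lam_pos lam beta Hsector n).
Qed.
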